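(* Consider the Waterfilling Mechanism (with exact bucketing) described in the context. Let $S$ be any nonempty finite set of analysts and let $j \notin S$ be a further analyst, each analyst $l$ having a workload $W_l \in \mathbb{R}^{m_l\times n}$, a weight $s_l>0$ and a selected strategy matrix $A_l$ satisfying $W_l = W_l A_l^+ A_l$ and having every column of $A_l$ of $L_1$ norm $1$. Then for every analyst $i \in S$, $$\mathrm{Err}_i\big(S\cup\{j\}\big) \le \mathrm{Err}_i(S),$$ i.e. adding an analyst to the collective cannot increase the expected error of any analyst.
   Context: Data are a vector $x\in\mathbb{R}^n$. Fix $\varepsilon>0$. Each analyst $l$ has a workload matrix $W_l$ (a set of linear queries), a weight $s_l>0$ (analyst $l$ is entitled to privacy budget $s_l\varepsilon$), and a strategy matrix $A_l$ produced for $W_l$ alone by a selection step (it depends only on $W_l$), satisfying $W_l = W_lA_l^+A_l$ (where $^+$ denotes the Moore–Penrose pseudo-inverse) and every column of $A_l$ having $L_1$ norm $1$. Fix a norm $\|\cdot\|$ on row vectors. Waterfilling Mechanism for a collective $S$ of analysts: maintain a set $B$ of buckets, each a unit vector $e$ with a weight $f_B(e)>0$, initially empty. For each $l\in S$ and each nonzero row $v$ of $s_lA_l$, let $e=v/\|v\|$; if $e\in B$, increase $f_B(e)$ by $\|v\|$, otherwise add $e$ to $B$ with $f_B(e)=\|v\|$. The joint strategy $A$ has one row $f_B(e)\,e$ for each $e\in B$. With total budget $\varepsilon_S=\big(\sum_{l\in S}s_l\big)\varepsilon$, the mechanism releases $y=Ax+\eta$ where $\eta$ has i.i.d. Laplace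 entries of scale $\|A\|_1/\varepsilon_S$, with $\|A\|_1$ the maximum $L_1$ norm of a column of $A$ (the $L_1$ sensitivity). Analyst $i$ estimates $W_ix$ by $W_iA^+y$. The expected error of analyst $i$ in collective $S$ is $\mathrm{Err}_i(S)=\mathbb{E}\|W_ix-W_iA^+y\|_2^2 = \frac{2\|A\|_1^2}{\varepsilon_S^2}\|W_iA^+\|_F^2$. *)

From HB Require Import structures.
From mathcomp Require Import all_boot all_order all_algebra.
From mathcomp Require Import reals.
From Stdlib Require Import ClassicalEpsilon.
Set Implicit Arguments. Unset Strict Implicit. Unset Printing Implicit Defensive.
Import Order.TTheory GRing.Theory Num.Theory.
Local Open Scope ring_scope.

Section Waterfilling.
Variable R : realType.

Definition is_MP_pinv (m k : nat) (A : 'M[R]_(m, k)) (P : 'M[R]_(k, m)) : Prop :=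
  [/\ A *m P *m A = A, P *m A *m P = P,
      (A *m P)^T = A *m P & (P *m A)^T = P *m A].

(* A^+ : the (unique) Moore-Penrose pseudo-inverse, chosen by Hilbert's epsilon. *)
Definition pinv (m k : nat) (A : 'M[R]_(m, k)) : 'M[R]_(k, m) :=
  epsilon (inhabits 0) (is_MP_pinv A).

Definition is_norm (n : nat) (nrm : 'rV[R]_n -> R) : Prop :=
  [/\ forall v, 0 <= nrm v,
      forall v, nrm v = 0 -> v = 0,
      forall (a : R) v, nrm (a *: v) = `|a| * nrm v
    & forall u v, nrm (u + v) <= nrm u + nrm v].

Definition L1sens (m k : nat) (A : 'M[R]_(m, k)) : R :=
  \big[Num.max/0]_(j < k) \sum_(i < m) `|A i j|.

Definition frob2 (m k : nat) (M : 'M[R]_(m, k)) : R :=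
  \sum_(i < m) \sum_(j < k) M i j ^+ 2.

Definition rows_of (p k : nat) (M : 'M[R]_(p, k)) : seq 'rV[R]_k :=
  [seq row i M | i <- enum 'I_p].

Variables (I : finType) (n : nat) (p : I -> nat).
Variables (A : forall l : I, 'M[R]_(p l, n)) (s : I -> R) (nrm : 'rV[R]_n -> R).

Definition coll_rows (S : {set I}) : seq 'rV[R]_n :=
  flatten [seq [seq v <- rows_of (s l *: A l) | v != 0] | l <- enum S].

Definition dir (v : 'rV[R]_n) : 'rV[R]_n := (nrm v)^-1 *: v.

Definition buckets (S : {set I}) : seq 'rV[R]_n := undup (map dir (coll_rows S)).

Definition bucket_weight (S : {set I}) (e : 'rV[R]_n) : R :=
  \sum_(v <- coll_rows S | dir v == e) nrm v.

Definition joint_rows (S : {set I}) : seq 'rV[R]_n :=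
  [seq bucket_weight S e *: e | e <- buckets S].

Definition joint_strategy (S : {set I}) : 'M[R]_(size (joint_rows S), n) :=
  \matrix_(i < size (joint_rows S), j < n) (nth 0 (joint_rows S) i) 0 j.

Definition budget (eps : R) (S : {set I}) : R := (\sum_(l in S) s l) * eps.

Variables (m : I -> nat) (W : forall l : I, 'M[R]_(m l, n)).

Definition Err (eps : R) (S : {set I}) (i : I) : R :=
  2 * L1sens (joint_strategy S) ^+ 2 / budget eps S ^+ 2
    * frob2 (W i *m pinv (joint_strategy S)).

End Waterfilling.

From HB Require Import structures.
From mathcomp Require Import all_boot all_order all_algebra.
From mathcomp Require Import reals ring.
From Stdlib Require Import ClassicalEpsilon.
Set Implicit Arguments. Unset Strict Implicit. Unset Printing Implicit Defensive.
Import Order.TTheory GRing.Theory Num.Theory.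
Local Open Scope ring_scope.

(** The L1 sensitivity of the joint strategy of a collective [S] is
    [sum_(l in S) s_l]: every column of [s_l A_l] has L1 norm [s_l], and a
    bucket only merges positive multiples of one direction, so nothing cancels.
    It cancels against the budget, leaving [Err_i(S) = 2/eps^2 ||W_i A_S^+||_F^2].
    Enlarging [S] to [T] only increases bucket weights, hence [A_S = D A_T] where
    [D] sends bucket [e] of [S] to bucket [e] of [T] with factor
    [f_S(e) / f_T(e) <= 1].  As [W_i] lies in the row space of [A_S],
    [W_i A_T^+ = (W_i A_S^+ D) (A_T A_T^+)], and neither the orthogonal projection
    [A_T A_T^+] nor [D], whose rows have disjoint supports and norm at most 1,
    increases the Frobenius norm. *)

Lemma rV_mul_tr_eq0 (R : realDomainType) k (v : 'rV[R]_k) : v *m v^T = 0 -> v = 0.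
Proof.
move/matrixP/(_ 0 0); rewrite !mxE => /psumr_eq0P v2_eq0.
apply/rowP => j; rewrite mxE; apply/eqP; rewrite -sqrf_eq0 expr2.
have := v2_eq0 _ j isT; rewrite mxE => -> //.
by move=> i _; rewrite mxE -expr2 sqr_ge0.
Qed.

Lemma row_free_mul_tr_unit (R : realFieldType) r q (M : 'M[R]_(r, q)) :
  row_free M -> M *m M^T \in unitmx.
Proof.
move=> freeM; rewrite -row_free_unit; apply: inj_row_free => v vMMt0.
have vM0 : v *m M = 0.
  by apply: rV_mul_tr_eq0; rewrite trmx_mul mulmxA -(mulmxA v) vMMt0 mul0mx.
by apply: (row_free_inj freeM); rewrite vM0 mul0mx.
Qed.

Lemma big_pred1_seq (V : nmodType) (T : eqType) (r : seq T) x (F : T -> V) :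
  uniq r -> x \in r -> \sum_(y <- r | y == x) F y = F x.
Proof.
by move=> r_uniq xr; rewrite -big_filter filter_pred1_uniq // big_seq1.
Qed.

Lemma big_undup_map_partition (V : nmodType) (T U : eqType) (f : T -> U)
    (r : seq T) (F : T -> V) :
  \sum_(e <- undup (map f r)) \sum_(v <- r | f v == e) F v = \sum_(v <- r) F v.
Proof.
under eq_bigr do rewrite big_mkcond /=.
rewrite exchange_big /= big_seq [RHS]big_seq; apply: eq_bigr => v vr.
under eq_bigr do rewrite eq_sym.
by rewrite -big_mkcond big_pred1_seq ?undup_uniq // mem_undup map_f.
Qed.

Lemma bigmax_cst (R : realDomainType) k (x : R) : 0 <= x ->
  \big[Num.max/0]_(c < k) x = if (0 < k)%N then x else 0.
Proof.
move=> x_ge0; rewrite big_const_ord; case: k => [|k] //=.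
by elim: k => [|k IHk] /=; rewrite ?IHk ?maxxx ?max_l.
Qed.

Section PseudoInverse.
Variable R : realType.

(* Full-rank factorisation [A = C F]: then [F^T (F F^T)^-1 (C^T C)^-1 C^T]
   satisfies the four Penrose conditions. *)
Lemma pinv_exists m k (A : 'M[R]_(m, k)) : exists P, is_MP_pinv A P.
Proof.
have [r [C [F [AE freeF freeCt]]]] : exists r (C : 'M_(m, r)) (F : 'M_(r, k)),
    [/\ A = C *m F, row_free F & row_free C^T].
  exists (\rank A), (col_base A), (row_base A); split.
  - by rewrite mulmx_base.
  - exact: row_base_free.
  - by rewrite /row_free mxrank_tr; apply: col_base_full.
have uH : F *m F^T \in unitmx by apply: row_free_mul_tr_unit.
have uG : C^T *m C \in unitmx by rewrite -{2}[C]trmxK row_free_mul_tr_unit.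
set H := F *m F^T in uH; set G := C^T *m C in uG.
have HtE : H^T = H by rewrite /H trmx_mul trmxK.
have GtE : G^T = G by rewrite /G trmx_mul trmxK.
exists (F^T *m invmx H *m invmx G *m C^T).
have AP : A *m (F^T *m invmx H *m invmx G *m C^T) = C *m invmx G *m C^T.
  by rewrite AE !mulmxA -(mulmxA C F) -/H -(mulmxA C H) mulmxV // mulmx1.
have PA : F^T *m invmx H *m invmx G *m C^T *m A = F^T *m invmx H *m F.
  rewrite AE !mulmxA -(mulmxA _ C^T C) -/G.
  by rewrite -(mulmxA _ (invmx G) G) mulVmx // mulmx1.
split.
- rewrite AP AE !mulmxA -(mulmxA _ C^T C) -/G.
  by rewrite -(mulmxA _ (invmx G) G) mulVmx // mulmx1.
- rewrite PA !mulmxA -(mulmxA _ F F^T) -/H.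
  by rewrite -(mulmxA _ (invmx H) H) mulVmx // mulmx1.
- by rewrite AP !trmx_mul trmxK trmx_inv GtE mulmxA.
- by rewrite PA !trmx_mul trmxK trmx_inv HtE mulmxA.
Qed.

Lemma pinvP m k (A : 'M[R]_(m, k)) : is_MP_pinv A (pinv A).
Proof. exact: epsilon_spec (pinv_exists A). Qed.

End PseudoInverse.

Lemma sqr_sum_disjoint (R : pzSemiRingType) (J : finType) (x : J -> R) :
  (forall a b, a != b -> x a * x b = 0) -> (\sum_a x a) ^+ 2 = \sum_a x a ^+ 2.
Proof.
move=> x_disj; rewrite expr2 big_distrl /=; apply: eq_bigr => a _.
rewrite big_distrr /= (bigD1 a) //= big1 ?addr0 // => b ba.
by rewrite x_disj // eq_sym.
Qed.

Section Frobenius.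
Variable R : realType.

Lemma frob2E p q (M : 'M[R]_(p, q)) : frob2 M = \tr (M *m M^T).
Proof.
apply: eq_bigr => i _; rewrite mxE.
by apply: eq_bigr => j _; rewrite !mxE expr2.
Qed.

Lemma frob2_ge0 p q (M : 'M[R]_(p, q)) : 0 <= frob2 M.
Proof. by apply: sumr_ge0 => i _; apply: sumr_ge0 => j _; apply: sqr_ge0. Qed.

(* Pythagoras: [Z = Z Q + Z (1 - Q)] with orthogonal summands. *)
Lemma frob2_mul_proj_le p q (Z : 'M[R]_(p, q)) (Q : 'M[R]_q) :
  Q^T = Q -> Q *m Q = Q -> frob2 (Z *m Q) <= frob2 Z.
Proof.
move=> QtE QQ.
have -> : frob2 Z = frob2 (Z *m Q) + frob2 (Z - Z *m Q).
  rewrite !frob2E -mxtraceD; congr (\tr _).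
  rewrite !trmx_mul QtE linearB /= trmx_mul QtE mulmxBl !mulmxBr.
  have -> : Z *m Q *m (Q *m Z^T) = Z *m Q *m Z^T by rewrite mulmxA -(mulmxA Z) QQ.
  by rewrite mulmxA subrr subr0 addrC subrK.
by rewrite lerDl frob2_ge0.
Qed.

Lemma frob2_mul_disjoint_rows_le p k k' (Y : 'M[R]_(p, k)) (D : 'M[R]_(k, k')) :
  (forall a a' b, a != a' -> D a b * D a' b = 0) ->
  (forall a, \sum_b D a b ^+ 2 <= 1) -> frob2 (Y *m D) <= frob2 Y.
Proof.
move=> D_disj D_le1; apply: ler_sum => r _.
have YD2E b : (Y *m D) r b ^+ 2 = \sum_a (Y r a * D a b) ^+ 2.
  rewrite mxE sqr_sum_disjoint // => a a' aa'.
  by rewrite mulrACA D_disj // mulr0.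
under eq_bigr => b _ do rewrite YD2E.
rewrite exchange_big /=; apply: ler_sum => a _.
under eq_bigr => b _ do rewrite exprMn.
by rewrite -big_distrr /= -[leRHS]mulr1 ler_wpM2l ?sqr_ge0.
Qed.

(* [W A'^+ = (W A^+ D) (A' A'^+)], and [A' A'^+] is an orthogonal projection. *)
Lemma frob2_mul_pinv_factor_le q k k' n (W : 'M[R]_(q, n)) (A : 'M[R]_(k, n))
    (A' : 'M[R]_(k', n)) (D : 'M[R]_(k, k')) :
  A = D *m A' ->
  (forall a a' b, a != a' -> D a b * D a' b = 0) ->
  (forall a, \sum_b D a b ^+ 2 <= 1) ->
  (W <= A)%MS -> frob2 (W *m pinv A') <= frob2 (W *m pinv A).
Proof.
move=> AE D_disj D_le1 /submxP [Z WE].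
have [APA _ _ _] := pinvP A; have [_ PAP' APt' _] := pinvP A'.
have WE' : W = W *m pinv A *m D *m A'.
  by rewrite -mulmxA -AE WE -!mulmxA (mulmxA A) APA.
rewrite {1}WE' -mulmxA.
apply: le_trans (frob2_mul_disjoint_rows_le _ D_disj D_le1).
apply: frob2_mul_proj_le => //.
by rewrite -mulmxA [pinv A' *m _]mulmxA PAP'.
Qed.

End Frobenius.

Section Waterfilling.
Variables (R : realType) (I : finType) (n : nat) (p : I -> nat).
Variables (A : forall l : I, 'M[R]_(p l, n)) (s : I -> R) (nrm : 'rV[R]_n -> R).
Hypothesis nrm_norm : is_norm nrm.
Hypothesis s_gt0 : forall l, 0 < s l.
Hypothesis A_col_norm1 : forall l (j : 'I_n), \sum_(i < p l) `|A l i j| = 1.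

Local Notation nz_rows l := [seq v <- rows_of (s l *: A l) | v != 0].
Local Notation coll S := (coll_rows A s S).
Local Notation bkts S := (buckets A s nrm S).
Local Notation weight S := (bucket_weight A s nrm S).
Local Notation joint S := (joint_strategy A s nrm S).
Local Notation nbkts S := (size (joint_rows A s nrm S)).

Lemma big_coll_rows (S : {set I}) (P : pred 'rV[R]_n) (F : 'rV[R]_n -> R) :
  \sum_(v <- coll S | P v) F v = \sum_(l in S) \sum_(v <- nz_rows l | P v) F v.
Proof. by rewrite /coll_rows big_flatten /= big_map big_enum. Qed.

Lemma coll_rowsP (S : {set I}) v :
  reflect (exists2 l, l \in S & v \in nz_rows l) (v \in coll S).
Proof.
apply: (iffP flattenP) => [[r /mapP [l lS ->] vr]|[l lS vr]].
  by exists l; rewrite // -mem_enum.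
by exists (nz_rows l) => //; apply: map_f; rewrite mem_enum.
Qed.

Lemma coll_rows_neq0 (S : {set I}) v : v \in coll S -> v != 0.
Proof. by case/coll_rowsP => l _; rewrite mem_filter => /andP []. Qed.

Lemma nrm_ge0 v : 0 <= nrm v.
Proof. by case: nrm_norm. Qed.

Lemma nrm_gt0 v : v != 0 -> 0 < nrm v.
Proof.
case: nrm_norm => _ nrm_eq0 _ _ v_neq0; rewrite lt_def nrm_ge0 andbT.
by apply: contra v_neq0 => /eqP /nrm_eq0 ->.
Qed.

Lemma scale_nrm_dir v : v != 0 -> nrm v *: dir nrm v = v.
Proof. by move=> v_neq0; rewrite scalerA mulfV ?scale1r // gt_eqF ?nrm_gt0. Qed.

Lemma bucket_weight_ge0 (S : {set I}) e : 0 <= weight S e.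
Proof. by apply: sumr_ge0 => v _; apply: nrm_ge0. Qed.

Lemma bucket_weight_gt0 (S : {set I}) e : e \in bkts S -> 0 < weight S e.
Proof.
rewrite mem_undup => /mapP [v vS ->].
rewrite /bucket_weight (big_rem v) //= eqxx.
rewrite (lt_le_trans (nrm_gt0 (coll_rows_neq0 vS))) // lerDl.
by apply: sumr_ge0 => w _; apply: nrm_ge0.
Qed.

Lemma bucket_weight_subset (S T : {set I}) e :
  S \subset T -> weight S e <= weight T e.
Proof.
move=> sST; rewrite /bucket_weight !big_coll_rows [leRHS](big_setID S) /=.
rewrite (setIidPr sST) lerDl.
by apply: sumr_ge0 => l _; apply: sumr_ge0 => v _; apply: nrm_ge0.
Qed.

Lemma buckets_subset (S T : {set I}) e :
  S \subset T -> e \in bkts S -> e \in bkts T.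
Proof.
move=> sST; rewrite !mem_undup => /mapP [v /coll_rowsP [l lS vl] ->].
by rewrite map_f //; apply/coll_rowsP; exists l => //; apply: (subsetP sST).
Qed.

Lemma size_joint_rows (S : {set I}) : nbkts S = size (bkts S).
Proof. exact: size_map. Qed.

Lemma big_joint_rows (S : {set I}) (G : 'rV[R]_n -> R) :
  \sum_(a < nbkts S) G (nth 0 (bkts S) a) = \sum_(e <- bkts S) G e.
Proof. by rewrite size_joint_rows (big_nth 0) big_mkord. Qed.

Lemma mem_nth_buckets (S : {set I}) (a : 'I_(nbkts S)) :
  nth 0 (bkts S) a \in bkts S.
Proof. by rewrite mem_nth // -size_joint_rows. Qed.

Lemma joint_strategyE (S : {set I}) (a : 'I_(nbkts S)) c :
  joint S a c = weight S (nth 0 (bkts S) a) * (nth 0 (bkts S) a) 0 c.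
Proof. by rewrite mxE (nth_map 0) ?mxE // -size_joint_rows. Qed.

Lemma sum_abs_coll_rows (S : {set I}) c :
  \sum_(v <- coll S) `|v 0 c| = \sum_(l in S) s l.
Proof.
rewrite big_coll_rows; apply: eq_bigr => l _.
rewrite big_filter big_mkcond /=.
transitivity (\sum_(v <- rows_of (s l *: A l)) `|v 0 c|).
  by apply: eq_bigr => v _; case: eqP => // ->; rewrite mxE normr0.
rewrite /rows_of big_map big_enum /= -[RHS]mulr1 -(A_col_norm1 l c) big_distrr /=.
by apply: eq_bigr => i _; rewrite !mxE normrM gtr0_norm.
Qed.

Lemma sum_abs_joint_col (S : {set I}) c :
  \sum_(a < nbkts S) `|joint S a c| = \sum_(v <- coll S) `|v 0 c|.
Proof.
under eq_bigr => a _ do rewrite joint_strategyE.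
rewrite (big_joint_rows S (fun e => `|weight S e * e 0 c|)).
rewrite -[RHS](big_undup_map_partition (dir nrm)); apply: eq_bigr => e _.
rewrite normrM ger0_norm ?bucket_weight_ge0 // big_distrl /=.
rewrite big_seq_cond [RHS]big_seq_cond.
apply: eq_bigr => v /andP [vS /eqP <-].
have nrm_v_gt0 := nrm_gt0 (coll_rows_neq0 vS).
by rewrite mxE normrM ger0_norm ?invr_ge0 ?ltW // mulrA mulfV ?mul1r ?gt_eqF.
Qed.

Lemma L1sens_joint_strategy (S : {set I}) :
  L1sens (joint S) = if (0 < n)%N then \sum_(l in S) s l else 0.
Proof.
transitivity (\big[Num.max/0]_(c < n) \sum_(l in S) s l).
  by apply: eq_bigr => c _; rewrite sum_abs_joint_col sum_abs_coll_rows.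
by rewrite bigmax_cst // sumr_ge0 // => l _; apply: ltW.
Qed.

Lemma row_joint_strategy_bucket (S : {set I}) e : e \in bkts S ->
  exists a : 'I_(nbkts S), row a (joint S) = weight S e *: e.
Proof.
move=> eS; have lt_e : (index e (bkts S) < nbkts S)%N.
  by rewrite size_joint_rows index_mem.
exists (Ordinal lt_e); apply/rowP => c.
by rewrite mxE joint_strategyE /= nth_index // mxE.
Qed.

Lemma row_sub_joint_strategy (S : {set I}) i : i \in S -> (A i <= joint S)%MS.
Proof.
move=> iS; apply/row_subP => r.
have [->|Ar_neq0] := eqVneq (row r (A i)) 0; first exact: sub0mx.
set v := row r (s i *: A i).
have vE : v = s i *: row r (A i) by apply/rowP => c; rewrite !mxE.
have v_neq0 : v != 0 by rewrite vE scalemx_eq0 negb_or Ar_neq0 andbT gt_eqF.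
have vS : v \in coll S.
  apply/coll_rowsP; exists i => //; rewrite mem_filter v_neq0 /=.
  by apply: map_f; rewrite mem_enum.
have eS : dir nrm v \in bkts S by rewrite mem_undup map_f.
have [a rowaE] := row_joint_strategy_bucket eS.
have -> : row r (A i) =
    ((s i)^-1 * nrm v / weight S (dir nrm v)) *: row a (joint S).
  rewrite rowaE scalerA divfK ?gt_eqF ?bucket_weight_gt0 //.
  by rewrite -scalerA scale_nrm_dir // vE scalerA mulVf ?gt_eqF // scale1r.
by rewrite scalemx_sub ?row_sub.
Qed.

Definition bucket_transfer (S T : {set I}) : 'M[R]_(nbkts S, nbkts T) :=
  \matrix_(a, b) let e := nth 0 (bkts S) a in
    if nth 0 (bkts T) b == e then weight S e / weight T e else 0.

Lemma sum_buckets_pred1 (T : {set I}) e (G : 'rV[R]_n -> R) : e \in bkts T ->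
  \sum_(b < nbkts T) (if nth 0 (bkts T) b == e then G (nth 0 (bkts T) b) else 0)
  = G e.
Proof.
move=> eT; rewrite (big_joint_rows T (fun x => if x == e then G x else 0)).
by rewrite -big_mkcond big_pred1_seq ?undup_uniq.
Qed.

Lemma joint_strategy_transfer (S T : {set I}) : S \subset T ->
  joint S = bucket_transfer S T *m joint T.
Proof.
move=> sST; apply/matrixP => a c; rewrite joint_strategyE mxE.
set e := nth 0 (bkts S) a; have eS : e \in bkts S := mem_nth_buckets a.
have eT := buckets_subset sST eS.
under eq_bigr => b _ do
  rewrite mxE joint_strategyE /= -/e (fun_if (fun x => x * _)) mul0r.
pose G x := weight S e / weight T e * (weight T x * x 0 c).
rewrite (sum_buckets_pred1 G eT) /G.
by rewrite mulrA divfK // gt_eqF // bucket_weight_gt0.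
Qed.

Lemma bucket_transfer_disjoint (S T : {set I}) a a' b : a != a' ->
  bucket_transfer S T a b * bucket_transfer S T a' b = 0.
Proof.
move=> neq_aa'; rewrite !mxE /=.
case: eqP => [ea|_]; last by rewrite mul0r.
case: eqP => [ea'|_]; last by rewrite mulr0.
have lt_a : (a < size (bkts S))%N by rewrite -size_joint_rows.
have lt_a' : (a' < size (bkts S))%N by rewrite -size_joint_rows.
case/eqP: neq_aa'; apply/val_inj/eqP.
by rewrite -(nth_uniq 0 lt_a lt_a' (undup_uniq _)) -ea -ea'.
Qed.

Lemma bucket_transfer_row_le1 (S T : {set I}) a : S \subset T ->
  \sum_b bucket_transfer S T a b ^+ 2 <= 1.
Proof.
move=> sST; set e := nth 0 (bkts S) a.
have eS : e \in bkts S := mem_nth_buckets a; have eT := buckets_subset sST eS.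
under eq_bigr => b _ do rewrite mxE /= -/e (fun_if (fun x => x ^+ 2)) expr0n /=.
rewrite (sum_buckets_pred1 (fun=> (weight S e / weight T e) ^+ 2) eT).
rewrite exprn_ile1 // ?divr_ge0 ?bucket_weight_ge0 //.
by rewrite ler_pdivrMr ?mul1r ?bucket_weight_subset ?bucket_weight_gt0.
Qed.

Variables (m : I -> nat) (W : forall l : I, 'M[R]_(m l, n)) (eps : R).
Hypothesis eps_gt0 : 0 < eps.
Hypothesis W_row_space : forall l, W l = W l *m pinv (A l) *m A l.

Lemma Err_joint_strategy (S : {set I}) i : S != set0 ->
  Err A s nrm W eps S i =
  (if (0 < n)%N then 2 / eps ^+ 2 else 0) * frob2 (W i *m pinv (joint S)).
Proof.
case/set0Pn => l lS.
have sum_s_gt0 : 0 < \sum_(k in S) s k.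
  rewrite (bigD1 l) //= (lt_le_trans (s_gt0 l)) // lerDl.
  by apply: sumr_ge0 => k _; apply: ltW.
rewrite /Err L1sens_joint_strategy /budget; case: ifP => _; last first.
  by rewrite expr2 !(mulr0, mul0r).
by congr (_ * _); field; rewrite !gt_eqF.
Qed.

Lemma Err_subset_le (S T : {set I}) i : S != set0 -> S \subset T -> i \in S ->
  Err A s nrm W eps T i <= Err A s nrm W eps S i.
Proof.
move=> S_neq0 sST iS.
have T_neq0 : T != set0 by apply: contraNneq S_neq0 => T0; rewrite -subset0 -T0.
rewrite !Err_joint_strategy //; apply: ler_wpM2l.
  by case: ifP => // _; rewrite divr_ge0 ?exprn_ge0 ?ltW.
apply: frob2_mul_pinv_factor_le (joint_strategy_transfer sST) _ _ _.
- exact: bucket_transfer_disjoint.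
- by move=> a; apply: bucket_transfer_row_le1.
- by rewrite W_row_space (submx_trans (submxMl _ _) (row_sub_joint_strategy iS)).
Qed.

End Waterfilling.

Theorem mainTheorem1 (R : realType) (I : finType) (n : nat)
    (m p : I -> nat) (W : forall l : I, 'M[R]_(m l, n))
    (A : forall l : I, 'M[R]_(p l, n)) (s : I -> R)
    (nrm : 'rV[R]_n -> R) (eps : R) :
  is_norm nrm ->
  0 < eps ->
  (forall l, 0 < s l) ->
  (forall l, W l = W l *m pinv (A l) *m A l) ->
  (forall l (j : 'I_n), \sum_(i < p l) `|A l i j| = 1) ->
  forall (S : {set I}) (j : I), S != set0 -> j \notin S ->
  forall i, i \in S ->
    Err A s nrm W eps (j |: S) i <= Err A s nrm W eps S i.
Proof.
move=> nrm_norm eps_gt0 s_gt0 W_row_space A_col_norm1 S j S_neq0 _ i iS.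
exact: (Err_subset_le nrm_norm s_gt0 A_col_norm1 eps_gt0 W_row_space S_neq0
  (subsetUr _ _) iS).
Qed.
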